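(* Let $w\in W'(d,2m;\vec 0)$. If $\Phi(\phi(w))=w$, then $\phi(w)\in\overline G_r(U,V;d)$.
   Context: $n,r,d\ge1$, $m=rn$. $U=\{u_1\prec\cdots\prec u_n\}$, $V=\{v_1\prec\cdots\prec v_n\}$. An $r$-regular bipartite multigraph on $(U,V)$ is a multiset of edges $uv$ in which every vertex has degree $r$. Edges $uv,u'v'$ are noncrossing if ($u\prec u'$ and $v\prec v'$) or ($u'\prec u$ and $v'\prec v$); a planar matching is a set of pairwise noncrossing edges; $L(G)$ is its maximum size; $G_r(U,V;d)$ is the set of $r$-regular multigraphs $G$ with $L(G)\le d$. $\overline U=U\times[r]$, $\overline V=V\times[r]$ ordered lexicographically (write $u^s$ for $(u,s)$); noncrossing pairs in $\overline U\times\overline V$ defined the same way. An $r$-configuration is a bijection between $\overline U$ and $\overline V$; a quasi configuration is a partial matching. For $G$ an $r$-regular multigraph, its associated configuration $\overline G$: for each edge $uv$ of multiplicity $t\ge1$, let $i$ be the number of edges $uv'$ (with multiplicity) with $v\prec v'$, $j$ the number of edges $u'v$ with $u\prec u'$; $\overline G$ contains $(u^{i+s},v^{j+t-s+1})$, $s=1,\dots,t$. $\overline G_r(U,V;d)=\{\overline G:G\in G_r(U,V;d)\}$. Walks $w=a_{u_1^1}\cdots a_{u_n^r}|b_{v_1^1}\cdots b_{v_n^r}$ ($a,b\in[d]$) in $\mathbb Z^d$ from the origin with steps $e_{a_{\bar u}}$ ($\bar u$ increasing) then $-e_{b_{\bar v}}$ ($\bar v$ increasing); $W'(d,2m;\vec0)$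 is the set of those ending at the origin with $a_{u^s}\ge a_{u^{s+1}}$ and $b_{v^s}\ge b_{v^{s+1}}$ for all $u\in U,v\in V$, $1\le s<r$. For an $r$-configuration $F$: $a_{\bar u}$ is the maximum size of a set of pairwise noncrossing pairs of $F$ containing the pair $(\bar u,\bar v')\in F$, all of whose pairs $(x,y)$ satisfy $x\preceq\bar u$, $y\preceq\bar v'$; $b_{\bar v}$ symmetrically; $\Phi(F)=a_{u_1^1}\cdots a_{u_n^r}|b_{v_1^1}\cdots b_{v_n^r}$. $A_k(w)=\{\bar u:a_{\bar u}=k\}$, $B_k(w)=\{\bar v:b_{\bar v}=k\}$; connecting equal-size ordered sets $A,B$ in a crossing way: pair the $i$-th smallest of $A$ with the $i$-th largest of $B$; $\phi(w)$: for each $k$, if $|A_k(w)|\ge|B_k(w)|$ connect the $|B_k(w)|$ smallest elements of $A_k(w)$ with $B_k(w)$ in a crossing way, else connect $A_k(w)$ with the $|A_k(w)|$ largest elements of $B_k(w)$ in a crossing way. *)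

From mathcomp Require Import all_boot all_order.
Set Implicit Arguments. Unset Strict Implicit. Unset Printing Implicit Defensive.

(* Vertices: U = V = 'I_n, ordered by the natural order (u_1 < ... < u_n is
   encoded 0 < ... < n-1).  Copies: Ubar = Vbar = 'I_n * 'I_r, where (u, s)
   encodes u^(s+1), ordered lexicographically. *)
Section Defs.
Variables n r : nat.
Definition pt := ('I_n * 'I_r)%type.

Definition ltL (x y : pt) : bool :=
  (x.1 < y.1) || ((x.1 == y.1) && (x.2 < y.2)).
Definition leL (x y : pt) : bool := (x == y) || ltL x y.

Definition ncpair (p q : pt * pt) : bool :=
  (ltL p.1 q.1 && ltL p.2 q.2) || (ltL q.1 p.1 && ltL q.2 p.2).
Definition pw_nc (S : {set pt * pt}) : bool :=
  [forall p in S, forall q in S, (p != q) ==> ncpair p q].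

Definition regular (G : 'I_n -> 'I_n -> nat) : Prop :=
  (forall u, \sum_(v < n) G u v = r) /\ (forall v, \sum_(u < n) G u v = r).

Definition ncedge (e f : 'I_n * 'I_n) : bool :=
  ((e.1 < f.1) && (e.2 < f.2)) || ((f.1 < e.1) && (f.2 < e.2)).

Definition L_le (G : 'I_n -> 'I_n -> nat) (d : nat) : Prop :=
  forall S : {set 'I_n * 'I_n},
    (forall e, e \in S -> 0 < G e.1 e.2) ->
    (forall e f, e \in S -> f \in S -> e != f -> ncedge e f) ->
    #|S| <= d.

(* associated configuration Gbar: for an edge uv of multiplicity t >= 1,
   i = #{edges uv' : v < v'}, j = #{edges u'v : u < u'}, and Gbar contains
   (u^(i+s), v^(j+t-s+1)), s = 1..t; with 0-based copy indices and s0 = s-1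
   this is ((u, i+s0), (v, j+t-1-s0)), s0 = 0..t-1. *)
Definition assoc_conf (G : 'I_n -> 'I_n -> nat) : {set pt * pt} :=
  [set p : pt * pt |
    let u := p.1.1 in let v := p.2.1 in
    let t := G u v in
    let i := \sum_(v' < n | v < v') G u v' in
    let j := \sum_(u' < n | u < u') G u' v in
    [exists s0 : 'I_r, [&& s0 < t, (p.1.2 : nat) == i + s0
                         & (p.2.2 : nat) == j + t - s0.+1]]].

Definition in_Gbar (d : nat) (F : {set pt * pt}) : Prop :=
  exists G : 'I_n -> 'I_n -> nat, [/\ regular G, L_le G d & assoc_conf G = F].

Definition A_ (a : pt -> nat) (k : nat) : {set pt} := [set x | a x == k].

(* w in W'(d, 2m; 0): letters in [d], the walk ends at the origin (the k-th
   coordinate of the endpoint is #A_k - #B_k), and the letters are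
   weakly decreasing within each block u^1,...,u^r (resp. v^1,...,v^r). *)
Definition inW' (d : nat) (a b : pt -> nat) : Prop :=
  [/\ forall x, 1 <= a x <= d,
      forall y, 1 <= b y <= d,
      forall k, 1 <= k <= d -> #|A_ a k| = #|A_ b k|,
      forall (u : 'I_n) (s s' : 'I_r), s.+1 = s' -> a (u, s') <= a (u, s)
    & forall (v : 'I_n) (s s' : 'I_r), s.+1 = s' -> b (v, s') <= b (v, s)].

Definition rank_lo (A : {set pt}) (x : pt) : nat := #|[set y in A | ltL y x]|.
Definition rank_hi (A : {set pt}) (x : pt) : nat := #|[set y in A | ltL x y]|.

Definition smallest (k : nat) (A : {set pt}) : {set pt} :=
  [set x in A | rank_lo A x < k].
Definition largest (k : nat) (B : {set pt}) : {set pt} :=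
  [set y in B | rank_hi B y < k].

Definition cross_connect (A B : {set pt}) : {set pt * pt} :=
  [set p : pt * pt | [&& p.1 \in A, p.2 \in B & rank_lo A p.1 == rank_hi B p.2]].

Definition phi (d : nat) (a b : pt -> nat) : {set pt * pt} :=
  \bigcup_(k < d.+1 | 0 < k)
    (if #|A_ b k| <= #|A_ a k|
     then cross_connect (smallest #|A_ b k| (A_ a k)) (A_ b k)
     else cross_connect (A_ a k) (largest #|A_ a k| (A_ b k))).

Definition Phi_a (F : {set pt * pt}) (x : pt) : nat :=
  \max_(S : {set pt * pt} | [&& S \subset F, pw_nc S &
        [exists p in S, (p.1 == x) &&
           [forall q in S, leL q.1 p.1 && leL q.2 p.2]]]) #|S|.
Definition Phi_b (F : {set pt * pt}) (y : pt) : nat :=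
  \max_(S : {set pt * pt} | [&& S \subset F, pw_nc S &
        [exists p in S, (p.2 == y) &&
           [forall q in S, leL q.1 p.1 && leL q.2 p.2]]]) #|S|.
End Defs.

(* Write F = phi(w).  Each letter class A_k is joined to B_k by an injective
   "crossing" matching, so F is a partial matching, and since every letter of
   Phi(F) = w is at least 1, every copy u^s and v^s is matched.  If two copies
   u^s, u^s' (s < s') of the same vertex were matched in increasing order, an
   optimal noncrossing chain ending at the first pair would extend by the
   second, giving a(u^s') > a(u^s) against the monotonicity of the letters
   inside a block; so F reverses the order inside every block, and likewise on
   the V side (obtained by transposing F, which exchanges Phi_a and Phi_b).
   Counting pairs then shows that F is exactly the configuration associated
   with the r-regular multigraph G(u,v) = #{pairs of F between u and v}, and a
   planar matching of G lifts to a noncrossing chain of F, so L(G) <= d. *)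

From mathcomp Require Import all_boot all_order.
From mathcomp Require Import zify.
Set Implicit Arguments. Unset Strict Implicit. Unset Printing Implicit Defensive.

Section Order.
Variables n r : nat.
Local Notation pt := (pt n r).

Definition code (x : pt) : nat := x.1 * r + x.2.

Lemma code_inj : injective code.
Proof.
move=> [x1 x2] [y1 y2]; rewrite /code /= => e.
have := ltn_ord x2; have := ltn_ord y2 => hy hx.
have e1 : x1 = y1 :> nat by case: (ltngtP x1 y1) => h //; nia.
have e2 : x2 = y2 :> nat by move: e; rewrite e1; lia.
by rewrite (val_inj e1) (val_inj e2).
Qed.

Lemma ltL_code (x y : pt) : ltL x y = (code x < code y).
Proof.
rewrite /ltL /code; have := ltn_ord x.2; have := ltn_ord y.2.
case: (ltngtP x.1 y.1) => h /= hy hx.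
- by apply/esym/idP; nia.
- rewrite -val_eqE (gtn_eqF h) /=; apply/esym/negbTE; rewrite -leqNgt; nia.
- by rewrite (val_inj h) eqxx /=; lia.
Qed.

Lemma leL_code (x y : pt) : leL x y = (code x <= code y).
Proof. by rewrite /leL ltL_code [RHS]leq_eqVlt (inj_eq code_inj). Qed.

Lemma ltLxx (x : pt) : ltL x x = false.
Proof. by rewrite ltL_code ltnn. Qed.

Lemma ltL_total (x y : pt) : x != y -> ltL x y || ltL y x.
Proof. by rewrite !ltL_code -neq_ltn (inj_eq code_inj). Qed.

Lemma ltL_block (x y : pt) : x.1 = y.1 -> ltL x y = (x.2 < y.2).
Proof. by move=> e; rewrite /ltL e ltnn eqxx. Qed.

Lemma ltL_asym (x y : pt) : ltL x y -> ltL y x = false.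
Proof. by rewrite !ltL_code => lt; apply/negbTE; rewrite -leqNgt ltnW. Qed.

Lemma ltL_fst (x y : pt) : x.1 < y.1 -> ltL x y.
Proof. by rewrite /ltL => ->. Qed.

Lemma pt_inj (x y : pt) : x.1 = y.1 -> x.2 = y.2 :> nat -> x = y.
Proof. by case: x y => [? ?] [? ?] /= -> /val_inj ->. Qed.

Lemma card_ord_lt m : m <= r -> #|[pred s : 'I_r | s < m]| = m.
Proof.
move=> le_mr; rewrite -sum1_card (eq_bigl (fun s : 'I_r => s < m)) //.
by rewrite -(big_ord_widen _ (fun _ => 1)) // sum1_card card_ord.
Qed.

Lemma rank_lo_inj (A : {set pt}) : {in A &, injective (rank_lo A)}.
Proof.
suff mono x y : x \in A -> y \in A -> ltL x y -> rank_lo A x < rank_lo A y.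
  move=> x y xA yA e; apply/eqP; apply: contraT => /ltL_total /orP[] lt.
    by have := mono _ _ xA yA lt; rewrite e ltnn.
  by have := mono _ _ yA xA lt; rewrite e ltnn.
move=> xA yA lt; apply/proper_card/properP; split.
  apply/subsetP => z; rewrite !inE => /andP[-> lt'] /=.
  by move: lt' lt; rewrite !ltL_code; apply: ltn_trans.
by exists x; rewrite !inE ?xA ?lt // ltLxx.
Qed.

Lemma rank_hi_inj (B : {set pt}) : {in B &, injective (rank_hi B)}.
Proof.
suff mono x y : x \in B -> y \in B -> ltL x y -> rank_hi B y < rank_hi B x.
  move=> x y xB yB e; apply/eqP; apply: contraT => /ltL_total /orP[] lt.
    by have := mono _ _ xB yB lt; rewrite e ltnn.
  by have := mono _ _ yB xB lt; rewrite e ltnn.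
move=> xB yB lt; apply/proper_card/properP; split.
  apply/subsetP => z; rewrite !inE => /andP[-> lt'] /=.
  by move: lt lt'; rewrite !ltL_code; apply: ltn_trans.
by exists y; rewrite !inE ?xB ?yB ?lt // ltLxx.
Qed.

End Order.

Section Matching.
Variables n r : nat.
Local Notation pt := (pt n r).
Local Notation conf := {set pt * pt}.

Lemma cross_connect_fst_inj (A B : {set pt}) : {in cross_connect A B &, injective fst}.
Proof.
move=> [x y] [x' y']; rewrite !inE /= => /and3P[_ yB /eqP e] /and3P[_ y'B /eqP e'] ex.
by rewrite -ex (rank_hi_inj yB y'B) // -e -e' ex.
Qed.

Lemma cross_connect_snd_inj (A B : {set pt}) : {in cross_connect A B &, injective snd}.
Proof.
move=> [x y] [x' y']; rewrite !inE /= => /and3P[xA _ /eqP e] /and3P[x'A _ /eqP e'] ey.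
by rewrite -ey (rank_lo_inj xA x'A) // e e' ey.
Qed.

Definition phi_block (a b : pt -> nat) (k : nat) : conf :=
  if #|A_ b k| <= #|A_ a k|
  then cross_connect (smallest #|A_ b k| (A_ a k)) (A_ b k)
  else cross_connect (A_ a k) (largest #|A_ a k| (A_ b k)).

Lemma mem_phi d (a b : pt -> nat) p :
  p \in phi d a b -> exists k, [/\ p \in phi_block a b k, a p.1 = k & b p.2 = k].
Proof.
case/bigcupP => k _ pk; exists k.
have [] : p.1 \in A_ a k /\ p.2 \in A_ b k.
  move: pk; rewrite /phi_block; case: ifP => _; rewrite inE => /and3P[]; rewrite !inE.
    by move=> /andP[-> _] ->.
  by move=> -> /andP[-> _].
by rewrite !inE => /eqP-> /eqP->.
Qed.

Lemma phi_block_fst_inj (a b : pt -> nat) k : {in phi_block a b k &, injective fst}.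
Proof. by rewrite /phi_block; case: ifP => _; apply: cross_connect_fst_inj. Qed.

Lemma phi_block_snd_inj (a b : pt -> nat) k : {in phi_block a b k &, injective snd}.
Proof. by rewrite /phi_block; case: ifP => _; apply: cross_connect_snd_inj. Qed.

Lemma phi_fst_inj d (a b : pt -> nat) : {in phi d a b &, injective fst}.
Proof.
move=> p q /mem_phi[k [pk ak _]] /mem_phi[k' [qk' ak' _]] e.
have ekk : k = k' :> nat by rewrite -ak -ak' e.
by apply: (phi_block_fst_inj pk) e; rewrite ekk.
Qed.

Lemma phi_snd_inj d (a b : pt -> nat) : {in phi d a b &, injective snd}.
Proof.
move=> p q /mem_phi[k [pk _ bk]] /mem_phi[k' [qk' _ bk']] e.
have ekk : k = k' :> nat by rewrite -bk -bk' e.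
by apply: (phi_block_snd_inj pk) e; rewrite ekk.
Qed.

End Matching.

Section Transpose.
Variables n r : nat.
Local Notation pt := (pt n r).
Local Notation conf := {set pt * pt}.

Definition swap (p : pt * pt) : pt * pt := (p.2, p.1).

Lemma swapK : involutive swap. Proof. by case. Qed.

Definition transpose (F : conf) : conf := swap @: F.

Lemma mem_transpose F p : (p \in transpose F) = (swap p \in F).
Proof. by rewrite /transpose (can2_imset_pre _ swapK swapK) inE. Qed.

Lemma transposeK : involutive transpose.
Proof. by move=> F; apply/setP => p; rewrite !mem_transpose swapK. Qed.

Lemma card_transpose F : #|transpose F| = #|F|.
Proof. exact/card_imset/(can_inj swapK). Qed.

Lemma transpose_sep F (P : pred (pt * pt)) :
  [set q in transpose F | P q] = transpose [set q in F | P (swap q)].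
Proof. by apply/setP => q; rewrite !(inE, mem_transpose) swapK. Qed.

Lemma transposeS S F : (transpose S \subset transpose F) = (S \subset F).
Proof.
apply/idP/idP; last exact: imsetS.
by rewrite -{2}(transposeK S) -{2}(transposeK F); apply: imsetS.
Qed.

Lemma exists_in_transpose F (P : pred (pt * pt)) :
  [exists p in transpose F, P p] = [exists p in F, P (swap p)].
Proof.
apply/exists_inP/exists_inP => -[p pF Pp]; exists (swap p); rewrite ?mem_transpose ?swapK //.
by rewrite -mem_transpose.
Qed.

Lemma forall_in_transpose F (P : pred (pt * pt)) :
  [forall p in transpose F, P p] = [forall p in F, P (swap p)].
Proof.
apply/forall_inP/forall_inP => allP p pF.
  by apply: allP; rewrite mem_transpose swapK.
by rewrite -[p]swapK; apply: allP; rewrite -mem_transpose.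
Qed.

Lemma ncpair_swap p q : ncpair (swap p) (swap q) = ncpair p q.
Proof. by rewrite /ncpair /= [ltL p.2 _ && _]andbC [ltL q.2 _ && _]andbC. Qed.

Lemma pw_nc_transpose S : pw_nc (transpose S) = pw_nc S.
Proof.
rewrite /pw_nc forall_in_transpose; apply: eq_forallb_in => p _.
rewrite forall_in_transpose; apply: eq_forallb_in => q _.
by rewrite (inj_eq (can_inj swapK)) ncpair_swap.
Qed.

Lemma Phi_a_transpose F y : Phi_a (transpose F) y = Phi_b F y.
Proof.
rewrite /Phi_a (reindex_inj (can_inj transposeK)); apply: eq_big => [S|S _].
  rewrite transposeS pw_nc_transpose exists_in_transpose; congr [&& _, _ & _].
  apply: eq_existsb_in => p _; rewrite forall_in_transpose; congr (_ && _).
  by apply: eq_forallb_in => q _; rewrite andbC.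
exact: card_transpose.
Qed.

Lemma transpose_fst_inj (F : conf) :
  {in F &, injective snd} -> {in transpose F &, injective fst}.
Proof.
move=> inj p q; rewrite !mem_transpose => pF qF e.
by apply: (can_inj swapK); apply: inj.
Qed.

Lemma transpose_snd_inj (F : conf) :
  {in F &, injective fst} -> {in transpose F &, injective snd}.
Proof.
move=> inj p q; rewrite !mem_transpose => pF qF e.
by apply: (can_inj swapK); apply: inj.
Qed.

End Transpose.

Section Phi.
Variables n r : nat.
Local Notation pt := (pt n r).
Local Notation conf := {set pt * pt}.

Definition nc_chain_to (F : conf) (x : pt) (S : conf) : bool :=
  [&& S \subset F, pw_nc S &
      [exists p in S, (p.1 == x) && [forall q in S, leL q.1 p.1 && leL q.2 p.2]]].

Lemma Phi_aE (F : conf) (x : pt) : Phi_a F x = \max_(S | nc_chain_to F x S) #|S|.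
Proof. by []. Qed.

Lemma Phi_a_attained (F : conf) (x : pt) :
  0 < Phi_a F x -> exists2 S, nc_chain_to F x S & #|S| = Phi_a F x.
Proof.
rewrite Phi_aE; case: (pickP (nc_chain_to F x)) => [S0 S0P _ | none].
  by rewrite (bigmax_eq_arg _ S0P); case: arg_maxnP => // S SP _; exists S.
by rewrite big_pred0.
Qed.

Lemma nc_chain_to_setU1 (F S : conf) (p : pt * pt) :
  p \in F -> S \subset F -> pw_nc S ->
  (forall q, q \in S -> ltL q.1 p.1 && ltL q.2 p.2) -> nc_chain_to F p.1 (p |: S).
Proof.
move=> pF SF ncS below; apply/and3P; split.
- by rewrite subUset sub1set pF.
- apply/forall_inP => q1; rewrite in_setU1 => /predU1P[-> | q1S];
    apply/forall_inP => q2; rewrite in_setU1 => /predU1P[-> | q2S]; apply/implyP.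
  + by rewrite eqxx.
  + by rewrite /ncpair (below _ q2S) orbT.
  + by rewrite /ncpair (below _ q1S).
  + by move: ncS => /forall_inP/(_ _ q1S)/forall_inP/(_ _ q2S)/implyP.
- apply/exists_inP; exists p; rewrite ?setU11 // eqxx /=.
  apply/forall_inP => q; rewrite in_setU1 => /predU1P[-> | /below /andP[lt1 lt2]].
    by rewrite /leL !eqxx.
  by rewrite /leL lt1 lt2 !orbT.
Qed.

Lemma Phi_a_gt0 (F : conf) (p : pt * pt) : p \in F -> 0 < Phi_a F p.1.
Proof.
move=> pF; rewrite -(cards1 p) -[[set p]]setU0 Phi_aE; apply: leq_bigmax_cond.
apply: nc_chain_to_setU1 => //; first exact: sub0set.
  by apply/forall_inP => ?; rewrite inE.
by move=> q; rewrite inE.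
Qed.

Lemma Phi_a_partner (F : conf) (x : pt) : 0 < Phi_a F x -> exists y, (x, y) \in F.
Proof.
case/Phi_a_attained => S /and3P[SF _ /exists_inP[p pS /andP[/eqP <- _]]] _.
by exists p.2; rewrite -surjective_pairing (subsetP SF).
Qed.

(* An optimal chain ending at [p.1] has top pair [p] (by injectivity), so [p'] extends it. *)
Lemma Phi_a_lt (F : conf) (p p' : pt * pt) :
  {in F &, injective fst} -> p \in F -> p' \in F ->
  ltL p.1 p'.1 -> ltL p.2 p'.2 -> Phi_a F p.1 < Phi_a F p'.1.
Proof.
move=> inj pF p'F lt1 lt2.
have [S /and3P[SF ncS /exists_inP[t tS /andP[/eqP t1 top]]] <-] :=
  Phi_a_attained (Phi_a_gt0 pF).
have tp : t = p by apply: inj; rewrite ?t1 // (subsetP SF).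
have below q : q \in S -> ltL q.1 p'.1 && ltL q.2 p'.2.
  move=> qS; move: top => /forall_inP/(_ _ qS); rewrite tp !leL_code.
  move: lt1 lt2; rewrite !ltL_code => u1 u2 /andP[v1 v2].
  by rewrite (leq_ltn_trans v1) ?(leq_ltn_trans v2).
have p'S : p' \notin S by apply: contraTN isT => /below; rewrite ltLxx.
have := @leq_bigmax_cond _ _ (fun S : conf => #|S|) _ (nc_chain_to_setU1 p'F SF ncS below).
by rewrite cardsU1 p'S.
Qed.

End Phi.

Lemma card_sep_orb (T : finType) (X : {set T}) (P Q : pred T) :
  (forall x, x \in X -> P x -> ~~ Q x) ->
  #|[set x in X | P x || Q x]| = #|[set x in X | P x]| + #|[set x in X | Q x]|.
Proof.
move=> PnQ; rewrite -cardsUI [_ :&: _](_ : _ = set0) ?cards0 ?addn0.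
  by apply: eq_card => x; rewrite !inE andb_orr.
apply/setP => x; rewrite !inE; apply/negbTE.
by apply/negP => /andP[/andP[xX Px] /andP[_ Qx]]; move: (PnQ x xX Px); rewrite Qx.
Qed.

Section Multigraph.
Variables n r : nat.
Local Notation pt := (pt n r).
Local Notation conf := {set pt * pt}.

Definition out_after (G : 'I_n -> 'I_n -> nat) (u v : 'I_n) : nat :=
  \sum_(v' < n | v < v') G u v'.
Definition in_after (G : 'I_n -> 'I_n -> nat) (u v : 'I_n) : nat :=
  \sum_(u' < n | u < u') G u' v.

Lemma out_after_mono G (u v v' : 'I_n) :
  v < v' -> out_after G u v' + G u v' <= out_after G u v.
Proof.
move=> lt; rewrite /out_after [X in _ <= X](bigD1 v') //= addnC leq_add2l.
apply: sub_le_big => [//|? ?|w lt']; first exact: leq_addr.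
by rewrite (ltn_trans lt lt') -val_eqE /= gtn_eqF.
Qed.

Lemma mem_assoc_conf (G : 'I_n -> 'I_n -> nat) (p : pt * pt) :
  (p \in assoc_conf r G) =
  [exists s : 'I_r, [&& s < G p.1.1 p.2.1,
                        p.1.2 == out_after G p.1.1 p.2.1 + s :> nat &
                        p.2.2 == in_after G p.1.1 p.2.1 + G p.1.1 p.2.1 - s.+1 :> nat]].
Proof. by rewrite inE. Qed.

Lemma assoc_conf_fst_inj (G : 'I_n -> 'I_n -> nat) (p q : pt * pt) :
  p \in assoc_conf r G -> q \in assoc_conf r G -> p.1 = q.1 -> p = q.
Proof.
rewrite !mem_assoc_conf => /existsP[s /and3P[st /eqP sp1 /eqP sp2]].
move=> /existsP[s' /and3P[st' /eqP sq1 /eqP sq2]] e1; rewrite -e1 in st' sq1 sq2.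
have e21 : p.2.1 = q.2.1.
  case: (ltngtP p.2.1 q.2.1) => [lt|lt|/val_inj //]; exfalso;
    have := out_after_mono G p.1.1 lt; lia.
rewrite -e21 in st' sq1 sq2; have ess : s = s' :> nat by lia.
rewrite [p]surjective_pairing [q]surjective_pairing e1; congr pair.
by apply: pt_inj => //; rewrite sp2 sq2 ess.
Qed.

Definition edge_set (F : conf) (u v : 'I_n) : conf :=
  [set q in F | (q.1.1 == u) && (q.2.1 == v)].
Definition mult (F : conf) (u v : 'I_n) : nat := #|edge_set F u v|.
Definition rank_fst (F : conf) (p : pt * pt) : nat :=
  #|[set q in edge_set F p.1.1 p.2.1 | q.1.2 < p.1.2]|.
Definition rank_snd (F : conf) (p : pt * pt) : nat :=
  #|[set q in edge_set F p.1.1 p.2.1 | q.2.2 < p.2.2]|.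

Lemma sum_mult (F : conf) (u : 'I_n) (P : pred 'I_n) :
  \sum_(v | P v) mult F u v = #|[set q in F | (q.1.1 == u) && P q.2.1]|.
Proof.
rewrite -sum1_card (partition_big (fun q => q.2.1) P) => [|q]; last first.
  by rewrite inE => /andP[_ /andP[]].
apply: eq_bigr => v Pv; rewrite /mult -sum1_card; apply: eq_bigl => q.
by rewrite !inE; case: (q.2.1 =P v) => [->|_]; rewrite ?Pv ?andbT ?andbF.
Qed.

Lemma out_after_mult (F : conf) u v :
  out_after (mult F) u v = #|[set q in F | (q.1.1 == u) && (v < q.2.1)]|.
Proof. exact: sum_mult. Qed.

Lemma edge_set_transpose (F : conf) u v :
  edge_set (transpose F) v u = transpose (edge_set F u v).
Proof. by apply/setP => q; rewrite !(inE, mem_transpose) /= [(q.1.1 == v) && _]andbC. Qed.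

Lemma mult_transpose (F : conf) u v : mult (transpose F) v u = mult F u v.
Proof. by rewrite /mult edge_set_transpose card_transpose. Qed.

Lemma rank_fst_transpose (F : conf) p : rank_fst (transpose F) (swap p) = rank_snd F p.
Proof. by rewrite /rank_fst /= edge_set_transpose transpose_sep card_transpose. Qed.

Lemma in_after_transpose (F : conf) u v :
  in_after (mult F) u v = out_after (mult (transpose F)) v u.
Proof. by apply: eq_bigr => u' _; rewrite mult_transpose. Qed.

Lemma ncpair_of_ncedge (p q : pt * pt) :
  ncedge (p.1.1, p.2.1) (q.1.1, q.2.1) -> ncpair p q.
Proof.
by rewrite /ncedge /ncpair /= => /orP[] /andP[/ltL_fst-> /ltL_fst->]; rewrite ?orbT.
Qed.

(* Lift every edge of a planar matching to a pair of [F]; the lift of the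
   rightmost edge tops the resulting noncrossing chain. *)
Lemma mult_L_le (F : conf) d : (forall x, Phi_a F x <= d) -> L_le (mult F) d.
Proof.
move=> Phi_le S Spos Snc.
have [-> | [e0 e0S]] := set_0Vmem S; first by rewrite cards0.
pose top := [arg max_(e > e0 in S) (e.1 : nat)].
have [topS top_max] : top \in S /\ {in S, forall e : 'I_n * 'I_n, e.1 <= top.1}.
  by rewrite /top; case: arg_maxnP => // e eS max; split=> // e' /max.
have lift e : e \in S -> exists q, q \in edge_set F e.1 e.2.
  by move=> /Spos; rewrite card_gt0 => /set0Pn.
have [q0 _] := lift _ topS.
pose g e := odflt q0 [pick q in edge_set F e.1 e.2].
have gP e : e \in S -> [/\ g e \in F, (g e).1.1 = e.1 & (g e).2.1 = e.2].
  move/lift => [q qe]; rewrite /g; case: pickP => [q' | /(_ q)]; last by rewrite qe.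
  by rewrite inE => /and3P[? /eqP-> /eqP->].
have gK : {in S, cancel g (fun q => (q.1.1, q.2.1))}.
  by move=> [u v] /gP[_ -> ->].
have g_nc e e' : e \in S -> e' \in S -> e != e' -> ncpair (g e) (g e').
  by move=> eS e'S ne; apply: ncpair_of_ncedge; rewrite !gK //; apply: Snc.
rewrite -(card_in_imset (can_in_inj gK)); apply: leq_trans (Phi_le (g top).1).
apply: leq_bigmax_cond; apply/and3P; split.
- by apply/subsetP => _ /imsetP[e /gP[]] ? _ _ ->.
- apply/forall_inP => _ /imsetP[e eS ->]; apply/forall_inP => _ /imsetP[e' e'S ->].
  by apply/implyP => ne; apply: g_nc => //; apply: contraNneq ne => ->.
- apply/exists_inP; exists (g top); rewrite ?imset_f // eqxx /=.
  apply/forall_inP => _ /imsetP[e eS ->].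
  have [-> | ne] := eqVneq e top; first by rewrite /leL !eqxx.
  have [_ ge1 ge2] := gP e eS; have [_ gt1 gt2] := gP top topS.
  case/orP: (Snc e top eS topS ne) => /andP[lt1 lt2].
    by rewrite /leL !ltL_fst ?ge1 ?ge2 ?gt1 ?gt2 ?orbT.
  by move: (top_max e eS); rewrite leqNgt lt1.
Qed.

End Multigraph.

Section Rows.
Variables (n r : nat) (F : {set pt n r * pt n r}) (a : pt n r -> nat).
Local Notation pt := (pt n r).

Hypothesis F_fst_inj : {in F &, injective fst}.
Hypothesis F_snd_inj : {in F &, injective snd}.
Hypothesis Phi_aF : forall x, Phi_a F x = a x.
Hypothesis a_gt0 : forall x, 0 < a x.
Hypothesis a_nonincr : forall x y : pt, x.1 = y.1 -> x.2 <= y.2 -> a y <= a x.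

Lemma row_partner (x : pt) : exists y, (x, y) \in F.
Proof. by apply: Phi_a_partner; rewrite Phi_aF. Qed.

Lemma row_reversal (p q : pt * pt) :
  p \in F -> q \in F -> p.1.1 = q.1.1 -> p.1.2 < q.1.2 -> ltL q.2 p.2.
Proof.
move=> pF qF e lt; have lt1 : ltL p.1 q.1 by rewrite ltL_block.
have ne : p.2 != q.2.
  by apply: contraTneq lt1 => /(F_snd_inj pF qF) ->; rewrite ltLxx.
case/orP: (ltL_total ne) => // lt2.
have := Phi_a_lt F_fst_inj pF qF lt1 lt2; rewrite !Phi_aF.
by rewrite ltnNge a_nonincr // ltnW.
Qed.

Lemma row_reversalE (p q : pt * pt) :
  p \in F -> q \in F -> p.1.1 = q.1.1 -> (p.1.2 < q.1.2) = ltL q.2 p.2.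
Proof.
move=> pF qF e; apply/idP/idP => [|lt2]; first exact: row_reversal.
case: (ltngtP p.1.2 q.1.2) => // [gt | e2].
  by have := row_reversal qF pF (esym e) gt; rewrite ltL_asym.
by rewrite (F_fst_inj pF qF (pt_inj e e2)) ltLxx in lt2.
Qed.

Lemma card_row (u : 'I_n) (R : pred 'I_r) : #|[set q in F | (q.1.1 == u) && R q.1.2]| = #|R|.
Proof.
pose g s : pt * pt := ((u, s), xchoose (row_partner (u, s))).
have gF s : g s \in F := xchooseP (row_partner (u, s)).
have -> : [set q in F | (q.1.1 == u) && R q.1.2] = g @: R.
  apply/setP => q; rewrite inE; apply/andP/imsetP => [[qF /andP[/eqP qu Rq]] | [s Rs ->]].
    by exists q.1.2 => //; apply: F_fst_inj qF (gF _) _; rewrite /= -qu -surjective_pairing.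
  by rewrite gF /= eqxx.
by apply: card_in_imset => s s' _ _ [].
Qed.

Lemma row_sum_mult (u : 'I_n) : \sum_(v < n) mult F u v = r.
Proof. by rewrite sum_mult (card_row u predT) card_ord. Qed.

Lemma row_position (p : pt * pt) :
  p \in F -> p.1.2 = out_after (mult F) p.1.1 p.2.1 + rank_fst F p :> nat.
Proof.
move=> pF; have := card_row p.1.1 [pred s : 'I_r | s < p.1.2].
rewrite card_ord_lt ?(ltnW (ltn_ord _)) // => <-.
have -> : rank_fst F p =
    #|[set q in F | ((q.1.1 == p.1.1) && (q.2.1 == p.2.1)) && (q.1.2 < p.1.2)]|.
  by apply: eq_card => q; rewrite !inE -!andbA.
rewrite out_after_mult -card_sep_orb => [|q _]; last first.
  move=> /andP[_ lt]; have /negbTE-> : q.2.1 != p.2.1 by rewrite -val_eqE /= gtn_eqF.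
  by rewrite andbF.
apply: eq_card => q; rewrite !inE; case qF: (q \in F); rewrite //=.
case: (q.1.1 =P p.1.1) => //= qu; rewrite (row_reversalE qF pF qu) /ltL.
case: (q.2.1 =P p.2.1) => [_ | /eqP qv] /=; first by case: (_ < _).
by rewrite eq_sym (negbTE qv) orbF.
Qed.

Lemma block_split (p : pt * pt) :
  p \in F -> mult F p.1.1 p.2.1 = rank_fst F p + 1 + rank_snd F p.
Proof.
move=> pF; set E := edge_set F p.1.1 p.2.1.
have pE : p \in E by rewrite inE pF !eqxx.
have -> : rank_snd F p = #|[set q in E | p.1.2 < q.1.2]|.
  apply: eq_card => q; rewrite !inE; have [qF|] := boolP (q \in F); rewrite //=.
  case: (q.1.1 =P p.1.1) => //= qu; case: (q.2.1 =P p.2.1) => //= qv.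
  by rewrite (row_reversalE pF qF (esym qu)) ltL_block.
have <- : #|[set q in E | q == p]| = 1.
  by rewrite -(cards1 p); apply: eq_card => q; rewrite in_set1 inE andb_idl // => /eqP->.
rewrite -!card_sep_orb => [|q _|q _]; last 2 first.
- by rewrite -leqNgt => /orP[/ltnW // | /eqP->].
- by apply: contraTneq => ->; rewrite ltnn.
apply: eq_card => q; rewrite !inE; have [qF|] := boolP (q \in F); rewrite //=.
case: (q.1.1 =P p.1.1) => //= qu; case: (q.2.1 =P p.2.1) => //= _.
case: ltngtP => [||e2]; rewrite ?orbT //= orbF; apply/esym/eqP/F_fst_inj => //.
by apply: pt_inj => //; rewrite e2.
Qed.

End Rows.

Section Gbar.
Variables (n r d : nat) (F : {set pt n r * pt n r}) (a b : pt n r -> nat).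
Hypothesis F_fst_inj : {in F &, injective fst}.
Hypothesis F_snd_inj : {in F &, injective snd}.
Hypothesis Phi_aF : forall x, Phi_a F x = a x.
Hypothesis Phi_bF : forall y, Phi_b F y = b y.
Hypothesis a_gt0 : forall x, 0 < a x.
Hypothesis b_gt0 : forall y, 0 < b y.
Hypothesis a_le : forall x, a x <= d.
Hypothesis a_nonincr : forall x y : pt n r, x.1 = y.1 -> x.2 <= y.2 -> a y <= a x.
Hypothesis b_nonincr : forall x y : pt n r, x.1 = y.1 -> x.2 <= y.2 -> b y <= b x.

Let Phi_a_tF y : Phi_a (transpose F) y = b y.
Proof. by rewrite Phi_a_transpose. Qed.

Let tF_fst_inj := transpose_fst_inj F_snd_inj.
Let tF_snd_inj := transpose_snd_inj F_fst_inj.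

Lemma col_position (p : pt n r * pt n r) :
  p \in F -> p.2.2 = in_after (mult F) p.1.1 p.2.1 + rank_snd F p :> nat.
Proof.
move=> pF; rewrite in_after_transpose -rank_fst_transpose.
apply: (row_position tF_fst_inj tF_snd_inj Phi_a_tF b_gt0 b_nonincr (p := swap p)).
by rewrite mem_transpose swapK.
Qed.

Lemma regular_mult : regular r (mult F).
Proof.
split=> [u | v]; first exact: row_sum_mult F_fst_inj Phi_aF a_gt0 u.
rewrite -[RHS](row_sum_mult tF_fst_inj Phi_a_tF b_gt0 v).
by apply: eq_bigr => u _; rewrite mult_transpose.
Qed.

Lemma mem_assoc_conf_mult (p : pt n r * pt n r) : p \in F -> p \in assoc_conf r (mult F).
Proof.
move=> pF; rewrite mem_assoc_conf.
have p1 := row_position F_fst_inj F_snd_inj Phi_aF a_gt0 a_nonincr pF.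
have p2 := col_position pF.
have split := block_split F_fst_inj F_snd_inj Phi_aF a_nonincr pF.
have lt_r : rank_fst F p < r by have := ltn_ord p.1.2; lia.
apply/existsP; exists (Ordinal lt_r); apply/and3P; rewrite /=.
by split; [lia | apply/eqP; lia | apply/eqP; lia].
Qed.

Lemma assoc_conf_mult : assoc_conf r (mult F) = F.
Proof.
apply/setP => p; apply/idP/idP => [pA | /mem_assoc_conf_mult //].
have [y pyF] := row_partner Phi_aF a_gt0 p.1.
suff -> : p = (p.1, y) by [].
by apply: assoc_conf_fst_inj pA (mem_assoc_conf_mult pyF) _.
Qed.

Lemma in_Gbar_conf : in_Gbar d F.
Proof.
exists (mult F); split; [exact: regular_mult | | exact: assoc_conf_mult].
by apply: mult_L_le => x; rewrite Phi_aF.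
Qed.

End Gbar.

Lemma nonincr_in_blocks n r (f : pt n r -> nat) :
  (forall u (s s' : 'I_r), s.+1 = s' -> f (u, s') <= f (u, s)) ->
  forall x y : pt n r, x.1 = y.1 -> x.2 <= y.2 -> f y <= f x.
Proof.
move=> step [u s] [u' s'] /= <- le_ss'.
pose g i := f (u, insubd s i).
have g_nonincr : {in [pred i | i < r] &, {homo g : i j / i <= j >-> j <= i}}.
  apply: homo_leq_in => [//|y x z le_yx le_zy|i j _ lt_j k /andP[_ lt_kj]|i lt_i lt_i1].
  - exact: leq_trans le_zy le_yx.
  - exact: ltn_trans lt_kj lt_j.
  - by apply: step; rewrite /= !insubdK // ltnW.
by have := g_nonincr s s' (ltn_ord s) (ltn_ord s') le_ss'; rewrite /g !valKd.
Qed.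

Theorem lemma9 (n r d : nat) (a b : pt n r -> nat) :
  1 <= n -> 1 <= r -> 1 <= d ->
  inW' d a b ->
  (forall x, Phi_a (phi d a b) x = a x) ->
  (forall y, Phi_b (phi d a b) y = b y) ->
  in_Gbar d (phi d a b).
Proof.
move=> _ _ _ [a_range b_range _ a_step b_step] Phi_aF Phi_bF.
apply: (in_Gbar_conf (@phi_fst_inj _ _ d a b) (@phi_snd_inj _ _ d a b) Phi_aF Phi_bF).
- by move=> x; case/andP: (a_range x).
- by move=> y; case/andP: (b_range y).
- by move=> x; case/andP: (a_range x).
- exact: nonincr_in_blocks.
- exact: nonincr_in_blocks.
Qed.
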